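(* Let $n$ be a positive integer, $g=3n+1$, and let $G$ be a pure $(2n)$-sparse gapset of genus $g$ with depth $q$. Then $G$ is symmetric if and only if $q=4$.
   Context: A gapset is a finite set $G\subset\mathbb{N}=\{1,2,\dots\}$ such that whenever $z\in G$ and $z=x+y$ with $x,y\in\mathbb{N}$, then $x\in G$ or $y\in G$; its genus is $g=\#G$. Write $G=\{\ell_1<\dots<\ell_g\}$. Multiplicity $m(G)=\min\{s\in\mathbb{N}:s\notin G\}$; conductor $c(G)=\min\{s\in\mathbb{N}: s+t\notin G\ \forall t\in\mathbb{N}_0\}$; Frobenius number $F(G)=c(G)-1=\ell_g$; depth $q(G)=\lceil c(G)/m(G)\rceil$. $G$ is symmetric if $F(G)=2g-1$. $G$ is pure $\kappa$-sparse if $\ell_{i+1}-\ell_i\le\kappa$ for all $i$ with equality for some $i$. *)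

From mathcomp Require Import all_boot.
Set Implicit Arguments. Unset Strict Implicit. Unset Printing Implicit Defensive.

(* A finite subset G of N = {1,2,...} is represented by a duplicate-free
   sequence of naturals (listing its elements in any order). *)

Definition is_gapset (G : seq nat) : Prop :=
  uniq G /\ (forall z, z \in G -> 0 < z) /\
  (forall z x y, z \in G -> 0 < x -> 0 < y -> z = x + y -> x \in G \/ y \in G).

Definition genus (G : seq nat) : nat := size G.

Lemma mem_le_sumn (G : seq nat) z : z \in G -> z <= sumn G.
Proof.
elim: G => [|a G IH] //=; rewrite inE => /orP [/eqP -> | H].
  exact: leq_addr.
by apply: leq_trans (IH H) _; exact: leq_addl.
Qed.

Lemma big_not_in (G : seq nat) (t : nat) : (sumn G).+1 + t \notin G.
Proof.
apply/negP => /mem_le_sumn H.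
by move: H; rewrite addSn ltnNge leq_addr.
Qed.

Lemma mult_ex (G : seq nat) : exists s, (0 < s) && (s \notin G).
Proof. exists ((sumn G).+1 + 0); by rewrite big_not_in. Qed.

Definition multiplicity (G : seq nat) : nat := ex_minn (mult_ex G).

(* conductor c(G) = min { s in N : s + t \notin G for all t in N_0 } *)
Lemma cond_ex (G : seq nat) :
  exists s, (0 < s) && [forall t : 'I_(sumn G).+1, s + t \notin G].
Proof.
exists (sumn G).+1; apply/andP; split => //; apply/forallP => t.
exact: big_not_in.
Qed.

(* The boolean predicate above is equivalent to cond_pred: elements of G are
   at most sumn G, so only t <= sumn G matter. *)
Definition conductor (G : seq nat) : nat := ex_minn (cond_ex G).

Definition frobenius (G : seq nat) : nat := (conductor G).-1.

(* depth q(G) = ceil(c(G)/m(G)) *)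
Definition depth (G : seq nat) : nat :=
  (conductor G + multiplicity G - 1) %/ multiplicity G.

Definition symmetric_gapset (G : seq nat) : Prop :=
  frobenius G = 2 * genus G - 1.

Definition pure_sparse (kappa : nat) (G : seq nat) : Prop :=
  let L := sort leq G in
  (forall i, i.+1 < size L -> nth 0 L i.+1 - nth 0 L i <= kappa) /\
  (exists i, i.+1 < size L /\ nth 0 L i.+1 - nth 0 L i = kappa).

From mathcomp Require Import all_boot zify.

(* A jump of 2n between consecutive gaps forces m >= 2n: otherwise the upper
   gap minus m would be a non-gap, and a sum of two non-gaps is a non-gap.
   Pairing x with F - x shows F <= 2g - 1 = 6n + 1, with equality exactly when
   x and F - x are never both gaps.  If G is symmetric, the last jump
   F - l_(g-1) <= 2n is therefore at least m (else F - l_(g-1) would be a gap),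
   so m = 2n and F = 3m + 1, i.e. q = 4.  Conversely q = 4 means 3m <= F < 4m,
   which with F <= 6n + 1 and m >= 2n leaves m = 2n and F in {3m, 3m + 1};
   F = 3m is impossible since multiples of m are non-gaps. *)

Set Implicit Arguments.
Unset Strict Implicit.
Unset Printing Implicit Defensive.

Section Invariants.
Variable G : seq nat.

Lemma multiplicity_gt0 : 0 < multiplicity G.
Proof. by rewrite /multiplicity; case: ex_minnP => m /andP[]. Qed.

Lemma multiplicity_notin : multiplicity G \notin G.
Proof. by rewrite /multiplicity; case: ex_minnP => m /andP[]. Qed.

Lemma lt_multiplicity_mem x : 0 < x -> x < multiplicity G -> x \in G.
Proof.
rewrite /multiplicity; case: ex_minnP => m _ m_min x_gt0 x_lt_m.
by apply/negPn/negP => xG; move: (m_min x); rewrite x_gt0 xG leqNgt x_lt_m => /(_ isT).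
Qed.

Lemma conductor_gt0 : 0 < conductor G.
Proof. by rewrite /conductor; case: ex_minnP => c /andP[]. Qed.

Lemma conductor_addn_notin t : conductor G + t \notin G.
Proof.
rewrite /conductor; case: ex_minnP => c /andP[_ /forallP c_free] _.
have [t_small | t_big] := leqP t (sumn G).
  exact: (c_free (Ordinal (t_small : t < (sumn G).+1))).
by apply/negP => /mem_le_sumn; lia.
Qed.

Lemma lt_conductor z : z \in G -> z < conductor G.
Proof.
move=> zG; rewrite ltnNge; apply/negP => c_le_z.
by move: (conductor_addn_notin (z - conductor G)); rewrite subnKC // zG.
Qed.

Lemma leq_frobenius z : z \in G -> z <= frobenius G.
Proof. by move/lt_conductor; rewrite /frobenius; lia. Qed.

Lemma frobenius_mem : G != [::] -> frobenius G \in G.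
Proof.
move=> G_neq0; apply/negPn/negP => FG.
have F_free t : frobenius G + t \notin G.
  case: t => [|t]; first by rewrite addn0.
  have -> : frobenius G + t.+1 = conductor G + t.
    by move: conductor_gt0; rewrite /frobenius; lia.
  exact: conductor_addn_notin.
have [F_eq0 | F_gt0] := posnP (frobenius G).
  move: F_free; rewrite F_eq0.
  by case: G G_neq0 FG => // z G' _ _ /(_ z); rewrite mem_head.
have : (0 < frobenius G) && [forall t : 'I_(sumn G).+1, frobenius G + t \notin G].
  by rewrite F_gt0; apply/forallP => t; exact: F_free.
by rewrite /frobenius /conductor; case: ex_minnP => c /andP[c_gt0 _] c_min /c_min; lia.
Qed.

Lemma depthE : depth G = (frobenius G %/ multiplicity G).+1.
Proof.
have m_gt0 := multiplicity_gt0; have c_gt0 := conductor_gt0.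
rewrite /depth /frobenius.
have -> : conductor G + multiplicity G - 1 = (conductor G).-1 + 1 * multiplicity G.
  by lia.
by rewrite divnDMl // addn1.
Qed.

Lemma depth_eq q :
  depth G = q.+1 <-> q * multiplicity G <= frobenius G < q.+1 * multiplicity G.
Proof.
have m_gt0 := multiplicity_gt0.
rewrite depthE -(leq_divRL _ _ m_gt0) -(ltn_divLR _ _ m_gt0).
by split=> [[->] | /andP[lo hi]]; [rewrite leqnn ltnSn | congr _.+1; lia].
Qed.

End Invariants.

Lemma count_subr_iota (a : pred nat) F :
  count (fun x => a (F - x)) (iota 1 F.-1) = count a (iota 1 F.-1).
Proof.
rewrite -[LHS](count_map (subn F)); apply/permP/uniq_perm; rewrite ?iota_uniq //.
  rewrite map_inj_in_uniq ?iota_uniq // => x y.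
  by rewrite !mem_iota => /andP[x_gt0 x_lt] /andP[y_gt0 y_lt]; lia.
move=> x; rewrite mem_iota; apply/mapP/idP => [[y] | x_range].
  by rewrite mem_iota => y_range ->; lia.
by exists (F - x); rewrite ?mem_iota; lia.
Qed.

Lemma count_mem_iota_lt (G : seq nat) F :
  F \in G -> count (mem G) (iota 1 F.-1) <= (size G).-1.
Proof.
move=> FG; rewrite -size_filter.
suff : size (F :: filter (mem G) (iota 1 F.-1)) <= size G by rewrite /=; lia.
apply: uniq_leq_size => [|x].
  by rewrite /= filter_uniq ?iota_uniq // mem_filter mem_iota andbT; lia.
by rewrite inE mem_filter => /orP[/eqP -> | /andP[]].
Qed.

Section Gapsets.
Variable G : seq nat.
Hypothesis G_gapset : is_gapset G.

Local Notation F := (frobenius G).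
Local Notation m := (multiplicity G).

Lemma gapset_gt0 z : z \in G -> 0 < z.
Proof. by case: G_gapset => _ [G_gt0 _]; exact: G_gt0. Qed.

Lemma gapset_split z x : z \in G -> 0 < x < z -> (x \in G) || (z - x \in G).
Proof.
move=> zG /andP[x_gt0 x_lt_z].
case: G_gapset => _ [_ /(_ z x (z - x) zG x_gt0)].
rewrite subn_gt0 x_lt_z subnKC ?(ltnW x_lt_z) //.
by case=> // [-> | ->]; rewrite ?orbT.
Qed.

Lemma gapset_addn_notin x y :
  0 < x -> 0 < y -> x \notin G -> y \notin G -> x + y \notin G.
Proof.
move=> x_gt0 y_gt0 xG yG; apply/negP => /(gapset_split (x := x)) split_xy.
have /split_xy : 0 < x < x + y by lia.
by rewrite addKn (negbTE xG) (negbTE yG).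
Qed.

Lemma muln_multiplicity_notin k : 0 < k -> k * m \notin G.
Proof.
have m_gt0 := multiplicity_gt0 G.
elim: k => // [[_ _ | k IH _]]; first by rewrite mul1n multiplicity_notin.
by rewrite mulSn gapset_addn_notin ?muln_gt0 ?IH ?multiplicity_notin.
Qed.

Lemma gap_jump_le_multiplicity a b : b \in G -> a < b ->
  (forall x, a < x < b -> x \notin G) -> b - a <= m.
Proof.
move=> bG a_lt_b no_gap; rewrite leqNgt; apply/negP => m_lt.
have m_gt0 := multiplicity_gt0 G.
have : (b - m) + m \notin G.
  apply: gapset_addn_notin => //; [lia | apply: no_gap; lia | exact: multiplicity_notin].
by rewrite subnK ?bG //; lia.
Qed.

Lemma frobenius_gap_pairs : G != [::] ->
  F.-1 + count (fun x => (x \in G) && (F - x \in G)) (iota 1 F.-1)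
    <= 2 * (genus G).-1.
Proof.
move=> G_neq0; have FG := frobenius_mem G_neq0.
have gap_or_subr_gap x : x \in iota 1 F.-1 -> (x \in G) || (F - x \in G).
  by rewrite mem_iota => x_range; apply: gapset_split => //; lia.
have count_subr_mem : count (fun x => F - x \in G) (iota 1 F.-1) =
    count (mem G) (iota 1 F.-1) := count_subr_iota (mem G) F.
have := count_predUI (mem G) (fun x => F - x \in G) (iota 1 F.-1).
rewrite count_subr_mem (@eq_in_count _ _ predT) ?count_predT ?size_iota //.
rewrite (@eq_count _ _ (fun x => (x \in G) && (F - x \in G))) //.
by have := count_mem_iota_lt FG; rewrite /genus; lia.
Qed.

Lemma frobenius_le_2genus : G != [::] -> F <= 2 * genus G - 1.
Proof.
move=> G_neq0; have := frobenius_gap_pairs G_neq0.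
have : 0 < size G by rewrite lt0n size_eq0.
by rewrite /genus; lia.
Qed.

Lemma symmetric_subr_notin x :
  symmetric_gapset G -> x \in G -> F - x \notin G.
Proof.
move=> G_sym xG; apply/negP => subr_xG.
have G_neq0 : G != [::] by case: (G) xG.
have no_pairs : count (fun x => (x \in G) && (F - x \in G)) (iota 1 F.-1) = 0.
  move: (frobenius_gap_pairs G_neq0) G_sym.
  by rewrite /symmetric_gapset /genus; lia.
move/eqP: no_pairs; rewrite -leqn0 leqNgt -has_count => /hasP; apply.
exists x; rewrite ?xG ?subr_xG ?mem_iota //.
by move: (gapset_gt0 xG) (gapset_gt0 subr_xG); lia.
Qed.

Lemma symmetric_multiplicity_le y :
  symmetric_gapset G -> y \in G -> y < F -> m <= F - y.
Proof.
move=> G_sym yG y_lt_F; rewrite leqNgt; apply/negP => subr_lt_m.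
have := symmetric_subr_notin G_sym yG.
by rewrite lt_multiplicity_mem ?subn_gt0.
Qed.

End Gapsets.

Section SortedGaps.
Variable G : seq nat.

Local Notation L := (sort leq G).

Lemma nth_sort_mem i : i < size G -> nth 0 L i \in G.
Proof. by move=> i_lt; rewrite -(mem_sort leq) mem_nth // size_sort. Qed.

Lemma nth_sort_leq i j : i <= j -> j < size G -> nth 0 L i <= nth 0 L j.
Proof.
move=> i_le_j j_lt; apply: (sorted_leq_nth leq_trans leqnn) => //.
- exact: (sort_sorted leq_total).
- by rewrite inE size_sort; exact: leq_ltn_trans j_lt.
- by rewrite inE size_sort.
Qed.

Lemma nth_sort_ltn i j : uniq G -> i < j -> j < size G -> nth 0 L i < nth 0 L j.
Proof.
move=> G_uniq i_lt_j j_lt.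
have L_ltn : sorted ltn L.
  by rewrite ltn_sorted_uniq_leq sort_uniq G_uniq (sort_sorted leq_total).
apply: (sorted_ltn_nth ltn_trans) => //; rewrite inE size_sort //.
exact: ltn_trans j_lt.
Qed.

Lemma nth_sort_consecutive_notin i x : i.+1 < size G ->
  nth 0 L i < x < nth 0 L i.+1 -> x \notin G.
Proof.
move=> i_lt /andP[lo hi]; apply/negP; rewrite -(mem_sort leq) => /(nthP 0)[j].
rewrite size_sort => j_lt x_eq; rewrite -x_eq in lo hi.
have [j_le_i | i_lt_j] := leqP j i.
  by move: lo; rewrite ltnNge nth_sort_leq // ltnW.
by move: hi; rewrite ltnNge nth_sort_leq.
Qed.

Lemma nth_sort_last : G != [::] -> nth 0 L (size G).-1 = frobenius G.
Proof.
move=> G_neq0; have g_gt0 : 0 < size G by rewrite lt0n size_eq0.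
have last_lt : (size G).-1 < size G by lia.
apply/eqP; rewrite eqn_leq leq_frobenius ?nth_sort_mem //=.
move: (frobenius_mem G_neq0); rewrite -(mem_sort leq) => /(nthP 0)[j].
rewrite size_sort => j_lt <-; apply: nth_sort_leq last_lt.
by rewrite -ltnS prednK.
Qed.

End SortedGaps.

Theorem mainTheorem6 (n : nat) (G : seq nat) :
  0 < n -> is_gapset G -> genus G = 3 * n + 1 -> pure_sparse (2 * n) G ->
  (symmetric_gapset G <-> depth G = 4).
Proof.
move=> n_gt0 G_gapset G_genus [jump_le [i [i_lt jump_eq]]].
have G_size : size G = 3 * n + 1 := G_genus.
rewrite size_sort G_size in jump_le i_lt.
have G_neq0 : G != [::] by rewrite -size_eq0 G_size addn1.
have G_uniq : uniq G by case: G_gapset.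
have m_ge : 2 * n <= multiplicity G.
  rewrite -jump_eq; apply: gap_jump_le_multiplicity => //.
  - by apply: nth_sort_mem; rewrite G_size.
  - by apply: nth_sort_ltn; rewrite ?G_size.
  - by move=> x; apply: nth_sort_consecutive_notin; rewrite G_size.
have F_le := frobenius_le_2genus G_gapset G_neq0.
rewrite depth_eq; split=> [G_sym | /andP[lo hi]].
  have last_idx : (size G).-1 = (3 * n).-1.+1 by rewrite G_size; lia.
  have F_eq := nth_sort_last G_neq0; rewrite last_idx in F_eq.
  set y := nth 0 (sort leq G) (3 * n).-1.
  have yG : y \in G by apply: nth_sort_mem; rewrite G_size; lia.
  have y_lt_F : y < frobenius G.
    by rewrite -F_eq; apply: nth_sort_ltn; rewrite ?G_size; lia.
  have last_jump : frobenius G - y <= 2 * n by rewrite -F_eq; apply: jump_le; lia.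
  have := symmetric_multiplicity_le G_gapset G_sym yG y_lt_F.
  by move: G_sym; rewrite /symmetric_gapset G_genus; lia.
have F_neq : frobenius G != 3 * multiplicity G.
  apply: contraNneq (muln_multiplicity_notin G_gapset (ltn0Sn 2)) => <-.
  exact: frobenius_mem.
by move: F_le; rewrite /symmetric_gapset G_genus; lia.
Qed.
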